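(* Fix any total budget $\mathrm{TB}\in\mathbb N_0$ and a game form $G$. If $G$ is a number, then $G+\bar G=0$.
   Context: Game forms are defined recursively: $G=\{G^{\mathcal L}\mid G^{\mathcal R}\}$ with finite sets of Left and Right options, and finite birthday. $0=\{\varnothing\mid\varnothing\}$. The conjugate is $\bar G=\{\overline{G^{\mathcal R}}\mid\overline{G^{\mathcal L}}\}$ (recursively, roles of the players swapped). The budget set for total budget $\mathrm{TB}$ is $\mathcal B=\{0,\dots,\mathrm{TB},\hat 0,\dots,\widehat{\mathrm{TB}}\}$: state $p$ (resp. $\hat p$) means Left holds $p$ dollars and Right holds $\mathrm{TB}-p$, and Right (resp. Left) holds the tie-breaking marker. Play of $(G,\tilde p)$: at every position (terminal ones included) both players bid simultaneously, Left $\ell\in\{0,\dots,p\}$, Right $r\in\{0,\dots,\mathrm{TB}-p\}$. If Left holds the marker (state $\hat p$): if $\ell>r$ Left moves to $(G^L,\widehat{p-\ell})$, or, including the marker (allowed when $\ell\ge r$), to $(G^L,p-\ell)$; if $\ell=r$ Left wins, the marker passes to Right, play continues at $(G^L,p-\ell)$; if $\ell<r$ Right moves to $(G^R,\widehat{p+r})$. Symmetrically when Right holds the marker (state $p$): if $r>\ell$ Right moves to $(G^R,p+r)$ or, including the marker, to $(G^R,\widehat{p+r})$; if $r=\ell$ Right wins, the marker passes to Left, play continues at $(G^R,\widehat{p+r})$; if $r<\ell$ Left moves to $(G^L,p-\ell)$. A player who wins a bid but has no option loses. $o(G,\tilde p)\in\{\mathrm L,\mathrm R\}$ is the winner under optimal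 play; $\mathrm L>\mathrm R$. Disjunctive sum $G+H=\{G^{\mathcal L}+H,G+H^{\mathcal L}\mid G^{\mathcal R}+H,G+H^{\mathcal R}\}$. $G\ge H$ means $o(G+X,\tilde p)\ge o(H+X,\tilde p)$ for all game forms $X$ and all $\tilde p\in\mathcal B$; $G=H$ means $G\ge H$ and $H\ge G$; $G>H$ means $G\ge H$ and not $H\ge G$. A game form $G$ is a number if all its options are numbers and $G^L<G<G^R$ for all $G^L\in G^{\mathcal L}$, $G^R\in G^{\mathcal R}$. *)

From Stdlib Require List.
From mathcomp Require Import all_boot.
Set Implicit Arguments. Unset Strict Implicit. Unset Printing Implicit Defensive.

(* Game forms: finite lists of Left and Right options (finite birthday by
   construction of the inductive type). *)
Inductive game : Type := Game : seq game -> seq game -> game.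

Definition lefts (g : game) : seq game := let: Game l _ := g in l.
Definition rights (g : game) : seq game := let: Game _ r := g in r.

Definition zero : game := Game [::] [::].

Fixpoint game_conj (g : game) : game :=
  let: Game l r := g in Game [seq game_conj x | x <- r] [seq game_conj x | x <- l].

Fixpoint game_add (g : game) : game -> game :=
  fix game_add_g (h : game) : game :=
    match g, h with
    | Game gl gr, Game hl hr =>
        Game ([seq game_add x h | x <- gl] ++ [seq game_add_g y | y <- hl])
             ([seq game_add x h | x <- gr] ++ [seq game_add_g y | y <- hr])
    end.

(* Outcome of the discrete bidding game with total budget TB.
   State (p, m): Left holds p dollars, Right holds TB - p;
   m = true  means Left holds the tie-breaking marker (the state written p-hat),
   m = false means Right holds the marker (the state written p).
   Result: true = L wins, false = R wins.
   o(G, (p,m)) = L iff Left has a bid l in [0,p] such that for every Right bid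
   r in [0, TB-p] the continuation is a Left win; the winner of a bid chooses
   an option (and, where allowed, whether to keep the marker); a player who
   wins the bid but has no option loses. *)
Fixpoint outcome (TB : nat) (g : game) (p : nat) (m : bool) : bool :=
  let: Game gl gr := g in
  let leftWin (ts : seq (nat * bool)) :=
      has (fun x => has (fun t => outcome TB x t.1 t.2) ts) gl in
  let rightWin (ts : seq (nat * bool)) :=
      all (fun x => all (fun t => outcome TB x t.1 t.2) ts) gr in
  has (fun l =>
         all (fun r =>
                if m then
                  (if r < l then leftWin [:: (p - l, true); (p - l, false)]
                   else if l == r then leftWin [:: (p - l, false)]
                   else rightWin [:: (p + r, true)])
                else
                  (if l < r then rightWin [:: (p + r, false); (p + r, true)]
                   else if l == r then rightWin [:: (p + r, true)]
                   else leftWin [:: (p - l, false)]))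
             (iota 0 (TB - p).+1))
      (iota 0 p.+1).

Definition game_ge (TB : nat) (G H : game) : Prop :=
  forall (X : game) (p : nat) (m : bool), p <= TB ->
    outcome TB (game_add H X) p m -> outcome TB (game_add G X) p m.

Definition game_eq (TB : nat) (G H : game) : Prop :=
  game_ge TB G H /\ game_ge TB H G.

Definition game_gt (TB : nat) (G H : game) : Prop :=
  game_ge TB G H /\ ~ game_ge TB H G.

Inductive is_number (TB : nat) : game -> Prop :=
  | is_number_intro (l r : seq game) :
      (forall x, List.In x l -> is_number TB x) ->
      (forall x, List.In x r -> is_number TB x) ->
      (forall x, List.In x l -> game_gt TB (Game l r) x) ->
      (forall x, List.In x r -> game_gt TB x (Game l r)) ->
      is_number TB (Game l r).

(* Call a game form K nonnegative if all its Right options are positive, and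
   positive if moreover some Left option is nonnegative.  By induction on K + X,
   adding a nonnegative K to X preserves every Left win, and adding a positive K
   turns a Left win of X without the tie-breaking marker into a Left win of
   K + X with it: Left keeps its strategy of X, and a Right move in K lands on
   a positive option.  The mirror statements hold for Right.
   Read A >= C as "A + conj C is nonnegative".  This syntactic order is
   transitive, is total on syntactic numbers, and implies the semantic order;
   these facts turn the semantic inequalities G^L < G < G^R defining a number
   into syntactic ones, so that G >= G.  Then G + conj G is nonnegative and
   nonpositive, and adding it to a game changes no outcome. *)

From Stdlib Require List.
From mathcomp Require Import all_boot zify.
Set Implicit Arguments. Unset Strict Implicit. Unset Printing Implicit Defensive.

Lemma hasInP (T : Type) (a : pred T) (s : seq T) :
  reflect (exists2 x, List.In x s & a x) (has a s).
Proof.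
elim: s => [|y s IH] /=; first by right=> -[].
have [ay|nay] /= := boolP (a y); first by left; exists y; [left|].
apply: (iffP IH) => [[x xs ax]|[x [<-|xs] ax]]; first by exists x; [right|].
  by rewrite ax in nay.
by exists x.
Qed.

Lemma allInP (T : Type) (a : pred T) (s : seq T) :
  reflect (forall x, List.In x s -> a x) (all a s).
Proof.
elim: s => [|y s IH] /=; first by left.
have [ay|nay] /= := boolP (a y); last by right=> /(_ y (or_introl erefl)); apply/negP.
by apply: (iffP IH) => H x; [case=> [<-|/H]|move=> xs; apply: H; right].
Qed.

Lemma eq_all_In (T : Type) (a b : pred T) (s : seq T) :
  (forall x, List.In x s -> a x = b x) -> all a s = all b s.
Proof.
by move=> ab; apply/allInP/allInP => H x x_in; [rewrite -ab | rewrite ab] => //; apply: H.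
Qed.

Lemma eq_has_In (T : Type) (a b : pred T) (s : seq T) :
  (forall x, List.In x s -> a x = b x) -> has a s = has b s.
Proof.
move=> ab; apply/hasInP/hasInP => -[x x_in ax]; exists x => //.
  by rewrite -ab.
by rewrite ab.
Qed.

Fixpoint game_size (g : game) : nat :=
  let: Game l r := g in (sumn (map game_size l) + sumn (map game_size r)).+1.

Lemma sumn_map_In (T : Type) (f : T -> nat) x s : List.In x s -> f x <= sumn (map f s).
Proof. by elim: s => //= y s IH [<-|/IH]; lia. Qed.

Lemma game_size_left x g : List.In x (lefts g) -> game_size x < game_size g.
Proof. by case: g => l r /= /(sumn_map_In game_size); lia. Qed.

Lemma game_size_right x g : List.In x (rights g) -> game_size x < game_size g.
Proof. by case: g => l r /= /(sumn_map_In game_size); lia. Qed.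

Ltac game_size_lia :=
  repeat match goal with
  | H : List.In _ (lefts _) |- _ => have := game_size_left H; clear H
  | H : List.In _ (rights _) |- _ => have := game_size_right H; clear H
  end; lia.

Lemma game_option_ind (P : game -> Prop) :
  (forall g, (forall x, List.In x (lefts g) -> P x) ->
             (forall x, List.In x (rights g) -> P x) -> P g) ->
  forall g, P g.
Proof.
move=> IH g; have [n] := ubnP (game_size g); elim: n g => // n IHn g /ltnSE g_le.
by apply: IH => x x_in; apply: IHn; game_size_lia.
Qed.

Lemma game_size2_ind (P : game -> game -> Prop) :
  (forall A B, (forall A' B', game_size A' + game_size B' < game_size A + game_size B ->
     P A' B') -> P A B) ->
  forall A B, P A B.
Proof.
move=> IH A B; have [n] := ubnP (game_size A + game_size B).
elim: n A B => // n IHn A B /ltnSE AB_le.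
by apply: IH => A' B' lt'; apply: IHn; lia.
Qed.

Lemma game_size3_ind (P : game -> game -> game -> Prop) :
  (forall A B C, (forall A' B' C', game_size A' + game_size B' + game_size C' <
     game_size A + game_size B + game_size C -> P A' B' C') -> P A B C) ->
  forall A B C, P A B C.
Proof.
move=> IH A B C; have [n] := ubnP (game_size A + game_size B + game_size C).
elim: n A B C => // n IHn A B C /ltnSE ABC_le.
by apply: IH => A' B' C' lt'; apply: IHn; lia.
Qed.

Lemma lefts_add G H :
  lefts (game_add G H) = [seq game_add x H | x <- lefts G] ++ [seq game_add G y | y <- lefts H].
Proof. by case: G; case: H. Qed.

Lemma rights_add G H :
  rights (game_add G H) = [seq game_add x H | x <- rights G] ++ [seq game_add G y | y <- rights H].
Proof. by case: G; case: H. Qed.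

Lemma lefts_conj G : lefts (game_conj G) = [seq game_conj x | x <- rights G].
Proof. by case: G. Qed.

Lemma rights_conj G : rights (game_conj G) = [seq game_conj x | x <- lefts G].
Proof. by case: G. Qed.

Lemma In_cat_map (T : Type) y (f g : T -> T) (s t : seq T) :
  List.In y ([seq f x | x <- s] ++ [seq g x | x <- t]) <->
  (exists2 x, List.In x s & y = f x) \/ (exists2 x, List.In x t & y = g x).
Proof.
rewrite List.in_app_iff !List.in_map_iff.
by split=> [[[x [<- ?]]|[x [<- ?]]]|[[x ? ->]|[x ? ->]]]; [left|right|left|right]; exists x.
Qed.

Lemma In_lefts_addl k K X :
  List.In k (lefts K) -> List.In (game_add k X) (lefts (game_add K X)).
Proof. by move=> k_in; rewrite lefts_add In_cat_map; left; exists k. Qed.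

Lemma In_lefts_addr x K X :
  List.In x (lefts X) -> List.In (game_add K x) (lefts (game_add K X)).
Proof. by move=> x_in; rewrite lefts_add In_cat_map; right; exists x. Qed.

Lemma In_rights_addl k K X :
  List.In k (rights K) -> List.In (game_add k X) (rights (game_add K X)).
Proof. by move=> k_in; rewrite rights_add In_cat_map; left; exists k. Qed.

Lemma In_rights_addr x K X :
  List.In x (rights X) -> List.In (game_add K x) (rights (game_add K X)).
Proof. by move=> x_in; rewrite rights_add In_cat_map; right; exists x. Qed.

(** * Outcomes and budgets *)

Section Outcome.
Variable TB : nat.

Definition some_left_move_wins (gl : seq game) (ts : seq (nat * bool)) :=
  has (fun x => has (fun t => outcome TB x t.1 t.2) ts) gl.

Definition all_right_moves_lose (gr : seq game) (ts : seq (nat * bool)) :=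
  all (fun x => all (fun t => outcome TB x t.1 t.2) ts) gr.

Definition left_wins_after_bids g p (m : bool) l r :=
  if m then
    (if r < l then some_left_move_wins (lefts g) [:: (p - l, true); (p - l, false)]
     else if l == r then some_left_move_wins (lefts g) [:: (p - l, false)]
     else all_right_moves_lose (rights g) [:: (p + r, true)])
  else
    (if l < r then all_right_moves_lose (rights g) [:: (p + r, false); (p + r, true)]
     else if l == r then all_right_moves_lose (rights g) [:: (p + r, true)]
     else some_left_move_wins (lefts g) [:: (p - l, false)]).

Lemma outcome_bidsE g p m : outcome TB g p m =
  has (fun l => all (left_wins_after_bids g p m l) (iota 0 (TB - p).+1)) (iota 0 p.+1).
Proof. by case: g. Qed.

Lemma outcomeP g p m :
  reflect (exists2 l, l <= p & forall r, r <= TB - p -> left_wins_after_bids g p m l r)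
          (outcome TB g p m).
Proof.
rewrite outcome_bidsE; apply: (iffP hasP) => [[l] | [l l_le H]].
  rewrite mem_iota => l_le /allP H; exists l => [|r r_le]; first lia.
  by apply: H; rewrite mem_iota; lia.
by exists l; [rewrite mem_iota; lia | apply/allP => r; rewrite mem_iota => r_le; apply: H; lia].
Qed.

Lemma outcomeNP g p m :
  reflect (forall l, l <= p -> exists2 r, r <= TB - p & ~~ left_wins_after_bids g p m l r)
          (~~ outcome TB g p m).
Proof.
rewrite outcome_bidsE; apply: (iffP hasPn) => H l.
  move=> l_le; have /H/allPn[r] : l \in iota 0 p.+1 by rewrite mem_iota; lia.
  by rewrite mem_iota => r_le nr; exists r => //; lia.
rewrite mem_iota => l_le; have [r r_le nr] := H l ltac:(lia).
by apply/allPn; exists r => //; rewrite mem_iota; lia.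
Qed.

Lemma some_left_move_winsP gl ts :
  reflect (exists2 x, List.In x gl & exists2 t, List.In t ts & outcome TB x t.1 t.2)
          (some_left_move_wins gl ts).
Proof. by apply: (iffP (hasInP _ _)) => -[x x_in /hasInP H]; exists x => //; apply/hasInP. Qed.

Lemma all_right_moves_loseP gr ts :
  reflect (forall x, List.In x gr -> forall t, List.In t ts -> outcome TB x t.1 t.2)
          (all_right_moves_lose gr ts).
Proof. by apply: (iffP (allInP _ _)) => H x x_in; apply/allInP; apply: H. Qed.

Lemma some_left_move_winsNP gl ts :
  reflect (forall x, List.In x gl -> forall t, List.In t ts -> ~~ outcome TB x t.1 t.2)
          (~~ some_left_move_wins gl ts).
Proof.
apply: (iffP (negPP (some_left_move_winsP _ _))) => [H x x_in t t_in|H [x x_in [t t_in]]].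
  by apply/negP => x_win; apply: H; exists x => //; exists t.
exact/negP/H.
Qed.

Lemma all_right_moves_loseNP gr ts :
  reflect (exists2 x, List.In x gr & exists2 t, List.In t ts & ~~ outcome TB x t.1 t.2)
          (~~ all_right_moves_lose gr ts).
Proof.
rewrite /all_right_moves_lose -has_predC; apply: (iffP (hasInP _ _)) => -[x x_in].
  by rewrite /= -has_predC => /hasInP[t t_in nx]; exists x => //; exists t.
by move=> [t t_in nx]; exists x => //=; rewrite -has_predC; apply/hasInP; exists t.
Qed.

Lemma some_left_move_wins_budgetS gl ts :
  (forall x, List.In x gl -> forall p m, p < TB -> outcome TB x p m -> outcome TB x p.+1 m) ->
  all (fun t => t.1 < TB) ts ->
  some_left_move_wins gl ts -> some_left_move_wins gl [seq (t.1.+1, t.2) | t <- ts].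
Proof.
move=> IH /allInP ts_lt /some_left_move_winsP[x x_in [t t_in x_win]].
apply/some_left_move_winsP; exists x => //; exists (t.1.+1, t.2); first exact: List.in_map.
by apply: IH => //; apply: ts_lt.
Qed.

Lemma all_right_moves_lose_budgetS gr ts :
  (forall x, List.In x gr -> forall p m, p < TB -> outcome TB x p m -> outcome TB x p.+1 m) ->
  all (fun t => t.1 < TB) ts ->
  all_right_moves_lose gr ts -> all_right_moves_lose gr [seq (t.1.+1, t.2) | t <- ts].
Proof.
move=> IH /allInP ts_lt /all_right_moves_loseP gr_win; apply/all_right_moves_loseP.
move=> x x_in _ /List.in_map_iff[t [<- t_in]].
by apply: IH => //; [apply: ts_lt | apply: gr_win].
Qed.

Lemma outcome_budgetS X p m : p < TB -> outcome TB X p m -> outcome TB X p.+1 m.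
Proof.
elim/game_option_ind: X p m => X IHl IHr p m p_lt /outcomeP[l l_le X_bid].
apply/outcomeP; exists l => [|r r_le]; first lia.
move: {X_bid}(X_bid r ltac:(lia)); rewrite /left_wins_after_bids addSn.
have -> : p.+1 - l = (p - l).+1 by lia.
case: m; case: ltngtP => _ bid.
all: first [ apply: (some_left_move_wins_budgetS IHl _ bid)
           | apply: (all_right_moves_lose_budgetS IHr _ bid)]; rewrite /=; lia.
Qed.

Lemma outcome_budget_mono X p q m : p <= q <= TB -> outcome TB X p m -> outcome TB X q m.
Proof.
elim: q => [|q IHq] /andP[p_le q_le] X_win.
  by move: X_win; have -> : p = 0 by lia.
have [p_le_q|] := leqP p q; last by move=> q_lt; have -> : q.+1 = p by lia.
by apply: outcome_budgetS; [lia | apply: IHq => //; lia].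
Qed.

Lemma outcome_budget_antimono X p q m : p <= q <= TB ->
  ~~ outcome TB X q m -> ~~ outcome TB X p m.
Proof. by move=> pq; apply: contra; apply: outcome_budget_mono. Qed.

End Outcome.

Section MovesInSums.
Variables (TB : nat) (K X : game) (ts : seq (nat * bool)).

Lemma all_right_moves_lose_add :
  (forall k, List.In k (rights K) ->
     forall t, List.In t ts -> outcome TB (game_add k X) t.1 t.2) ->
  (forall x, List.In x (rights X) ->
     forall t, List.In t ts -> outcome TB (game_add K x) t.1 t.2) ->
  all_right_moves_lose TB (rights (game_add K X)) ts.
Proof.
by move=> K_moves X_moves; apply/all_right_moves_loseP => y; rewrite rights_add In_cat_map;
  case=> -[z z_in ->]; [apply: K_moves | apply: X_moves].
Qed.

Lemma some_left_move_winsN_add :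
  (forall k, List.In k (lefts K) ->
     forall t, List.In t ts -> ~~ outcome TB (game_add k X) t.1 t.2) ->
  (forall x, List.In x (lefts X) ->
     forall t, List.In t ts -> ~~ outcome TB (game_add K x) t.1 t.2) ->
  ~~ some_left_move_wins TB (lefts (game_add K X)) ts.
Proof.
move=> K_moves X_moves; apply/some_left_move_winsP => -[y]; rewrite lefts_add In_cat_map.
by case=> -[z z_in ->] [t t_in]; apply/negP; [apply: K_moves | apply: X_moves].
Qed.

End MovesInSums.

(** * Adding games of known sign *)

Fixpoint pos_game (g : game) : bool :=
  let: Game l r := g in all pos_game r && has (fun x => all pos_game (rights x)) l.
Definition nonneg_game (g : game) : bool := all pos_game (rights g).

Fixpoint neg_game (g : game) : bool :=
  let: Game l r := g in all neg_game l && has (fun x => all neg_game (lefts x)) r.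
Definition nonpos_game (g : game) : bool := all neg_game (lefts g).

Lemma pos_gameE g : pos_game g = nonneg_game g && has nonneg_game (lefts g).
Proof. by case: g. Qed.

Lemma neg_gameE g : neg_game g = nonpos_game g && has nonpos_game (rights g).
Proof. by case: g. Qed.

Lemma pos_game_nonneg g : pos_game g -> nonneg_game g.
Proof. by rewrite pos_gameE => /andP[]. Qed.

Lemma neg_game_nonpos g : neg_game g -> nonpos_game g.
Proof. by rewrite neg_gameE => /andP[]. Qed.

Definition nonneg_add_keeps_win TB K X := nonneg_game K ->
  forall p m, p <= TB -> outcome TB X p m -> outcome TB (game_add K X) p m.

Definition pos_add_buys_marker TB K X := pos_game K ->
  forall p, p <= TB -> outcome TB X p false -> outcome TB (game_add K X) p true.

Section LeftAdditionStep.
Variables (TB : nat) (K X : game).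
Hypothesis IH : forall K' X', game_size K' + game_size X' < game_size K + game_size X ->
  nonneg_add_keeps_win TB K' X' /\ pos_add_buys_marker TB K' X'.

Let IH_K k : game_size k < game_size K ->
  nonneg_add_keeps_win TB k X /\ pos_add_buys_marker TB k X.
Proof. by move=> k_lt; apply: IH; lia. Qed.

Let IH_X x : game_size x < game_size X -> nonneg_add_keeps_win TB K x.
Proof. by move=> x_lt; exact: (proj1 (@IH K x ltac:(lia))). Qed.

Lemma nonneg_add_keeps_win_step : nonneg_add_keeps_win TB K X.
Proof.
move=> K_nonneg p m p_le X_win; have /outcomeP[l l_le X_bid] := X_win.
have left_moves ts : all (fun t => t.1 <= TB) ts ->
    some_left_move_wins TB (lefts X) ts -> some_left_move_wins TB (lefts (game_add K X)) ts.
  move=> /allInP ts_le /some_left_move_winsP[x x_in [t t_in x_win]].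
  apply/some_left_move_winsP; exists (game_add K x); first exact: In_lefts_addr.
  by exists t => //; apply: (IH_X (game_size_left x_in)) => //; apply: ts_le.
(* A Right move may hand the marker to Left but never takes it from Left. *)
have right_moves ts : all (fun t => (p <= t.1 <= TB) && (m ==> t.2)) ts ->
    all_right_moves_lose TB (rights X) ts -> all_right_moves_lose TB (rights (game_add K X)) ts.
  move=> /allInP ts_ok /all_right_moves_loseP X_moves.
  apply: all_right_moves_lose_add => [k k_in|x x_in] t t_in.
    have /andP[t_ok m_le] := ts_ok t t_in; move: t t_ok m_le {t_in} => [p' b] /= t_ok.
    have k_pos : pos_game k by move/allInP: K_nonneg; apply.
    have [k_keeps k_marker] := IH_K (game_size_right k_in).
    have X_win' := outcome_budget_mono t_ok X_win.
    case: m b X_win' {X_win X_bid ts_ok} => [] [] //= X_win' _;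
      [apply: k_keeps | apply: k_marker | apply: k_keeps] => //; try exact: pos_game_nonneg; lia.
  have /andP[t_ok _] := ts_ok t t_in.
  by apply: (IH_X (game_size_right x_in)) => //; [lia | apply: X_moves].
apply/outcomeP; exists l => // r r_le; move: {X_bid}(X_bid r r_le).
rewrite /left_wins_after_bids; case: m right_moves {X_win} => right_moves;
  case: ltngtP => _ bid;
  first [apply: left_moves bid | apply: right_moves bid]; rewrite /=; lia.
Qed.

Lemma pos_add_buys_marker_step : pos_add_buys_marker TB K X.
Proof.
move=> K_pos q q_le X_win; have /outcomeP[l l_le X_bid] := X_win.
move: K_pos; rewrite pos_gameE => /andP[K_nonneg /hasInP[kL kL_in kL_nonneg]].
have right_wins r : r <= TB - q -> l <= r ->
    all_right_moves_lose TB (rights (game_add K X)) [:: (q + r, true)].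
  move=> r_le l_le_r; apply: all_right_moves_lose_add => [k k_in|x x_in] _ [<-|[]] /=.
    have k_pos : pos_game k by move/allInP: K_nonneg; apply.
    apply: (IH_K (game_size_right k_in)).2 => //; first lia.
    by apply: outcome_budget_mono X_win; lia.
  apply: (IH_X (game_size_right x_in)) => //; first lia.
  move: (X_bid r r_le); rewrite /left_wins_after_bids.
  by case: ltngtP => [_|r_lt_l|_]; [|lia|];
    move/all_right_moves_loseP/(_ x x_in (q + r, true)); apply => /=; auto.
(* If Left bids l + 1 in X, it bids l here and the marker makes up for the
   dollar in ties; if it bids 0, it wins the tie at 0 with the marker and moves
   to a nonnegative Left option of K. *)
case: l l_le X_bid right_wins => [|l] l_le X_bid right_wins.
  apply/outcomeP; exists 0 => // -[|r] r_le; rewrite /left_wins_after_bids /=; last first.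
    exact: right_wins.
  apply/some_left_move_winsP; exists (game_add kL X); first exact: In_lefts_addl.
  exists (q - 0, false); first by left.
  by rewrite subn0; apply: (IH_K (game_size_left kL_in)).1.
apply/outcomeP; exists l => [|r r_le]; first lia.
have left_wins : r <= l ->
    exists2 x, List.In x (lefts X) & outcome TB (game_add K x) (q - l) false.
  move=> r_le_l; move: (X_bid r r_le); rewrite /left_wins_after_bids.
  case: ltngtP => [?|_|?]; [lia | | lia].
  move/some_left_move_winsP => [x x_in [_ [<-|[]] x_win]]; exists x => //.
  apply: (IH_X (game_size_left x_in)) => //; first lia.
  by apply: outcome_budget_mono x_win => /=; lia.
rewrite /left_wins_after_bids; case: (ltngtP l r) => [l_lt_r|r_lt_l|l_eq_r] /=.
  exact: right_wins.
all: have [x x_in x_win] := left_wins ltac:(lia).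
all: apply/some_left_move_winsP; exists (game_add K x); first exact: In_lefts_addr.
all: by exists (q - l, false) => //=; auto.
Qed.

End LeftAdditionStep.

Lemma outcome_add_nonneg TB K X p m : nonneg_game K -> p <= TB ->
  outcome TB X p m -> outcome TB (game_add K X) p m.
Proof.
move=> K_nonneg.
suff [keeps _] : nonneg_add_keeps_win TB K X /\ pos_add_buys_marker TB K X by exact: keeps.
move: K X {K_nonneg}; apply: game_size2_ind => K X IH.
by split; [apply: nonneg_add_keeps_win_step | apply: pos_add_buys_marker_step].
Qed.

Definition nonpos_add_keeps_loss TB K X := nonpos_game K ->
  forall p m, p <= TB -> ~~ outcome TB X p m -> ~~ outcome TB (game_add K X) p m.

Definition neg_add_buys_marker TB K X := neg_game K ->
  forall p, p <= TB -> ~~ outcome TB X p true -> ~~ outcome TB (game_add K X) p false.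

Section RightAdditionStep.
Variables (TB : nat) (K X : game).
Hypothesis IH : forall K' X', game_size K' + game_size X' < game_size K + game_size X ->
  nonpos_add_keeps_loss TB K' X' /\ neg_add_buys_marker TB K' X'.

Let IH_K k : game_size k < game_size K ->
  nonpos_add_keeps_loss TB k X /\ neg_add_buys_marker TB k X.
Proof. by move=> k_lt; apply: IH; lia. Qed.

Let IH_X x : game_size x < game_size X -> nonpos_add_keeps_loss TB K x.
Proof. by move=> x_lt; exact: (proj1 (@IH K x ltac:(lia))). Qed.

Lemma nonpos_add_keeps_loss_step : nonpos_add_keeps_loss TB K X.
Proof.
move=> K_nonpos p m p_le X_loss; apply/outcomeNP => l l_le.
have /outcomeNP/(_ l l_le)[r r_le X_bid] := X_loss.
have right_moves ts : all (fun t => t.1 <= TB) ts ->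
    ~~ all_right_moves_lose TB (rights X) ts ->
    ~~ all_right_moves_lose TB (rights (game_add K X)) ts.
  move=> /allInP ts_le /all_right_moves_loseNP[x x_in [t t_in x_loss]].
  apply/all_right_moves_loseNP; exists (game_add K x); first exact: In_rights_addr.
  by exists t => //; apply: (IH_X (game_size_right x_in)) => //; apply: ts_le.
(* A Left move may hand the marker to Right but never takes it from Right. *)
have left_moves ts : all (fun t => (t.1 <= p) && (t.2 ==> m)) ts ->
    ~~ some_left_move_wins TB (lefts X) ts ->
    ~~ some_left_move_wins TB (lefts (game_add K X)) ts.
  move=> /allInP ts_ok /some_left_move_winsNP X_moves.
  apply: some_left_move_winsN_add => [k k_in|x x_in] t t_in.
    have /andP[t_le m_ge] := ts_ok t t_in; move: t t_le m_ge {t_in} => [p' b] /= t_le.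
    have k_neg : neg_game k by move/allInP: K_nonpos; apply.
    have [k_keeps k_marker] := IH_K (game_size_left k_in).
    have X_loss' : ~~ outcome TB X p' m by apply: outcome_budget_antimono X_loss; lia.
    case: m b X_loss' {X_loss X_bid ts_ok} => [] [] //= X_loss' _;
      [apply: k_keeps | apply: k_marker | apply: k_keeps] => //; try exact: neg_game_nonpos; lia.
  have /andP[t_le _] := ts_ok t t_in.
  by apply: (IH_X (game_size_left x_in)) => //; [lia | apply: X_moves].
exists r => //; move: X_bid; rewrite /left_wins_after_bids.
case: m left_moves {X_loss} => left_moves; case: ltngtP => _ bid;
  first [apply: right_moves bid | apply: left_moves bid]; rewrite /=; lia.
Qed.

(* Where Right's answer in X reached Left's bid, Right answers one dollar less
   here and the marker restores the continuations; a tie at 0 Right wins with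
   the marker, moving to a nonpositive Right option of K. *)
Lemma neg_add_buys_marker_step : neg_add_buys_marker TB K X.
Proof.
move=> K_neg q q_le X_loss; apply/outcomeNP => l l_le.
move: K_neg; rewrite neg_gameE => /andP[K_nonpos /hasInP[kR kR_in kR_nonpos]].
have /outcomeNP/(_ l l_le)[rX rX_le X_bid] := X_loss.
have left_loses : (forall x, List.In x (lefts X) -> ~~ outcome TB x (q - l) false) ->
    ~~ some_left_move_wins TB (lefts (game_add K X)) [:: (q - l, false)].
  move=> X_moves; apply: some_left_move_winsN_add => [k k_in|x x_in] _ [<-|[]] /=.
    have k_neg : neg_game k by move/allInP: K_nonpos; apply.
    apply: (IH_K (game_size_left k_in)).2 => //; first lia.
    by apply: outcome_budget_antimono X_loss; lia.
  by apply: (IH_X (game_size_left x_in)) => //; [lia | apply: X_moves].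
move: X_bid; rewrite /left_wins_after_bids; case: (ltngtP rX l) => [rX_lt_l|l_lt_rX|rX_eq_l] /=.
- move/some_left_move_winsNP => X_moves; exists rX => //.
  case: (ltngtP l rX) => [|_|]; [lia | | lia].
  by apply: left_loses => x x_in; apply: (X_moves x x_in (q - l, false)) => /=; auto.
- move/all_right_moves_loseNP => [x x_in [_ [<-|[]] /= x_loss]].
  have x_loss' : ~~ outcome TB (game_add K x) (q + rX.-1) true.
    apply: (IH_X (game_size_right x_in)) => //; first lia.
    by apply: outcome_budget_antimono x_loss; lia.
  have right_wins ts : List.In (q + rX.-1, true) ts ->
      ~~ all_right_moves_lose TB (rights (game_add K X)) ts.
    move=> t_in; apply/all_right_moves_loseNP; exists (game_add K x).
      exact: In_rights_addr.
    by exists (q + rX.-1, true).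
  exists rX.-1; first lia.
  rewrite /left_wins_after_bids; case: (ltngtP l rX.-1) => [_|?|_] /=; [|lia|];
    by apply: right_wins => /=; auto.
- move/some_left_move_winsNP => X_moves; subst rX.
  case: l l_le rX_le X_moves left_loses => [|l] l_le rX_le X_moves left_loses.
    exists 0 => //=; apply/all_right_moves_loseNP; exists (game_add kR X).
      exact: In_rights_addl.
    exists (q + 0, true); first by left.
    apply: (IH_K (game_size_right kR_in)).1 => //=; first lia.
    by rewrite addn0.
  exists l; first lia.
  case: (ltngtP l.+1 l) => [|_|]; [lia | | lia].
  by apply: left_loses => x x_in; apply: (X_moves x x_in (q - l.+1, false)) => /=; auto.
Qed.

End RightAdditionStep.

Lemma outcome_add_nonpos TB K X p m : nonpos_game K -> p <= TB ->
  ~~ outcome TB X p m -> ~~ outcome TB (game_add K X) p m.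
Proof.
move=> K_nonpos.
suff [keeps _] : nonpos_add_keeps_loss TB K X /\ neg_add_buys_marker TB K X by exact: keeps.
move: K X {K_nonpos}; apply: game_size2_ind => K X IH.
by split; [apply: nonpos_add_keeps_loss_step | apply: neg_add_buys_marker_step].
Qed.

(** * Game forms up to the order of options *)

Definition seq_rel (T : Type) (R : T -> T -> Prop) (s t : seq T) :=
  (forall x, List.In x s -> exists2 y, List.In y t & R x y) /\
  (forall y, List.In y t -> exists2 x, List.In x s & R x y).

Section SeqRel.
Variables (T : Type) (R : T -> T -> Prop).

Lemma seq_rel_cat s1 s2 t1 t2 :
  seq_rel R s1 t1 -> seq_rel R s2 t2 -> seq_rel R (s1 ++ s2) (t1 ++ t2).
Proof.
move=> [st1 ts1] [st2 ts2]; split=> x; rewrite List.in_app_iff.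
  by case=> [/st1|/st2] [y y_in xy]; exists y => //; rewrite List.in_app_iff; [left|right].
by case=> [/ts1|/ts2] [y y_in xy]; exists y => //; rewrite List.in_app_iff; [left|right].
Qed.

Lemma seq_rel_catC s t1 t2 : seq_rel R s (t1 ++ t2) -> seq_rel R s (t2 ++ t1).
Proof.
have in_catC y : List.In y (t1 ++ t2) <-> List.In y (t2 ++ t1).
  by rewrite !List.in_app_iff; tauto.
by move=> [st ts]; split=> x => [/st|/in_catC/ts] [y y_in xy]; exists y => //; apply/in_catC.
Qed.

Lemma seq_rel_sub (R' : T -> T -> Prop) s t :
  (forall x y, List.In x s -> R x y -> R' x y) -> seq_rel R s t -> seq_rel R' s t.
Proof.
move=> RR' [st ts]; split=> x x_in.
  by have [y y_in xy] := st x x_in; exists y => //; apply: RR'.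
by have [y y_in yx] := ts x x_in; exists y => //; apply: RR'.
Qed.

Lemma seq_rel_sym s t : (forall x y, List.In x s -> R x y -> R y x) ->
  seq_rel R s t -> seq_rel R t s.
Proof.
move=> Rsym [st ts]; split=> x x_in.
  by have [y y_in yx] := ts x x_in; exists y => //; apply: Rsym.
by have [y y_in xy] := st x x_in; exists y => //; apply: Rsym.
Qed.

Lemma seq_rel_trans s t u : (forall x y z, List.In y t -> R x y -> R y z -> R x z) ->
  seq_rel R s t -> seq_rel R t u -> seq_rel R s u.
Proof.
move=> Rtrans [st ts] [tu ut]; split=> x x_in.
  have [y y_in xy] := st x x_in; have [z z_in yz] := tu y y_in.
  by exists z => //; apply: Rtrans xy yz.
have [y y_in yx] := ut x x_in; have [z z_in zy] := ts y y_in.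
by exists z => //; apply: Rtrans zy yx.
Qed.

Lemma seq_rel_map (R' : T -> T -> Prop) (f g : T -> T) s t :
  (forall x y, List.In x s -> R' x y -> R (f x) (g y)) ->
  seq_rel R' s t -> seq_rel R (map f s) (map g t).
Proof.
move=> RR' [st ts]; split=> _ /List.in_map_iff[x [<- x_in]].
  by have [y y_in xy] := st x x_in; exists (g y); [apply: List.in_map | apply: RR'].
by have [y y_in yx] := ts x x_in; exists (f y); [apply: List.in_map | apply: RR'].
Qed.

Lemma seq_rel_map2 (f g : T -> T) s :
  (forall x, List.In x s -> R (f x) (g x)) -> seq_rel R (map f s) (map g s).
Proof.
move=> fg; split=> _ /List.in_map_iff[x [<- x_in]].
  by exists (g x); [apply: List.in_map | apply: fg].
by exists (f x); [apply: List.in_map | apply: fg].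
Qed.

End SeqRel.

Inductive game_iso : game -> game -> Prop :=
  GameIso gl gr hl hr : seq_rel game_iso gl hl -> seq_rel game_iso gr hr ->
    game_iso (Game gl gr) (Game hl hr).

Lemma game_isoP g h : game_iso g h <->
  seq_rel game_iso (lefts g) (lefts h) /\ seq_rel game_iso (rights g) (rights h).
Proof. by split; [case | case: g; case: h => hl hr gl gr /= []; constructor]. Qed.

Lemma game_iso_refl g : game_iso g g.
Proof.
elim/game_option_ind: g => g IHl IHr; apply/game_isoP.
by split; split=> x x_in; exists x => //; [apply: IHl | apply: IHl | apply: IHr | apply: IHr].
Qed.

Lemma game_iso_sym g h : game_iso g h -> game_iso h g.
Proof.
elim/game_option_ind: g h => g IHl IHr h /game_isoP[gh_l gh_r].
apply/game_isoP; split; [apply: seq_rel_sym gh_l | apply: seq_rel_sym gh_r].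
  by move=> x y /IHl; apply.
by move=> x y /IHr; apply.
Qed.

Lemma game_iso_trans g h k : game_iso g h -> game_iso h k -> game_iso g k.
Proof.
elim/game_option_ind: h g k => h IHl IHr g k /game_isoP[gh_l gh_r] /game_isoP[hk_l hk_r].
apply/game_isoP; split; [apply: seq_rel_trans gh_l hk_l | apply: seq_rel_trans gh_r hk_r].
  by move=> x y z /IHl; apply.
by move=> x y z /IHr; apply.
Qed.

Lemma game_iso_add A B A' B' :
  game_iso A A' -> game_iso B B' -> game_iso (game_add A B) (game_add A' B').
Proof.
move: A B A' B'; apply: game_size2_ind => A B IH A' B' AA' BB'.
case/game_isoP: (AA') => AA_l AA_r; case/game_isoP: (BB') => BB_l BB_r.
apply/game_isoP; rewrite !lefts_add !rights_add.
split; apply: seq_rel_cat; [apply: seq_rel_map AA_l | apply: seq_rel_map BB_l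
  | apply: seq_rel_map AA_r | apply: seq_rel_map BB_r] => x y x_in xy;
  apply: IH => //; game_size_lia.
Qed.

Lemma game_add_isoC A B : game_iso (game_add A B) (game_add B A).
Proof.
move: A B; apply: game_size2_ind => A B IH.
apply/game_isoP; rewrite !lefts_add !rights_add.
split; apply: seq_rel_catC; apply: seq_rel_cat; apply: seq_rel_map2 => x x_in;
  apply: IH; game_size_lia.
Qed.

Lemma game_add_isoA A B C :
  game_iso (game_add (game_add A B) C) (game_add A (game_add B C)).
Proof.
move: A B C; apply: game_size3_ind => A B C IH.
apply/game_isoP; rewrite !lefts_add !rights_add !map_cat -!map_comp -!catA.
split; do 2?[apply: seq_rel_cat]; apply: seq_rel_map2 => x x_in; apply: IH; game_size_lia.
Qed.

Lemma game_add0_iso X : game_iso (game_add zero X) X.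
Proof.
elim/game_option_ind: X => X IHl IHr; apply/game_isoP.
rewrite lefts_add rights_add /= -{2}(map_id (lefts X)) -{2}(map_id (rights X)).
by split; apply: seq_rel_map2.
Qed.

Lemma some_left_move_wins_rel TB s t ts :
  seq_rel (fun x y => forall p m, outcome TB x p m = outcome TB y p m) s t ->
  some_left_move_wins TB s ts = some_left_move_wins TB t ts.
Proof.
move=> [st ts']; apply/some_left_move_winsP/some_left_move_winsP => -[x x_in [u u_in x_win]].
  by have [y y_in xy] := st x x_in; exists y => //; exists u; rewrite -?xy.
by have [y y_in yx] := ts' x x_in; exists y => //; exists u; rewrite ?yx.
Qed.

Lemma all_right_moves_lose_rel TB s t ts :
  seq_rel (fun x y => forall p m, outcome TB x p m = outcome TB y p m) s t ->
  all_right_moves_lose TB s ts = all_right_moves_lose TB t ts.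
Proof.
move=> [st ts']; apply/all_right_moves_loseP/all_right_moves_loseP => H x x_in u u_in.
  by have [y y_in <-] := ts' x x_in; apply: H.
by have [y y_in ->] := st x x_in; apply: H.
Qed.

Lemma outcome_iso TB g h p m : game_iso g h -> outcome TB g p m = outcome TB h p m.
Proof.
elim/game_option_ind: g h p m => g IHl IHr h p m /game_isoP[gh_l gh_r].
have E_l ts : some_left_move_wins TB (lefts g) ts = some_left_move_wins TB (lefts h) ts.
  by apply: some_left_move_wins_rel; apply: seq_rel_sub gh_l => x y /IHl IHx xy p' m'; apply: IHx.
have E_r ts : all_right_moves_lose TB (rights g) ts = all_right_moves_lose TB (rights h) ts.
  by apply: all_right_moves_lose_rel; apply: seq_rel_sub gh_r => x y /IHr IHx xy p' m'; apply: IHx.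
rewrite !outcome_bidsE; apply: eq_has => l; apply: eq_all => r.
by rewrite /left_wins_after_bids !E_l !E_r.
Qed.

Lemma game_add_isoACA A B C D :
  game_iso (game_add (game_add A B) (game_add C D)) (game_add (game_add A C) (game_add B D)).
Proof.
have isoA := game_add_isoA; have isoA' A' B' C' := game_iso_sym (isoA A' B' C').
apply: game_iso_trans (isoA _ _ _) _; apply: game_iso_trans _ (isoA' _ _ _).
apply: game_iso_add (game_iso_refl A) _.
apply: game_iso_trans (isoA' _ _ _) _; apply: game_iso_trans _ (isoA _ _ _).
exact: game_iso_add (game_add_isoC B C) (game_iso_refl D).
Qed.

Lemma game_add_sub_iso X Y Z : game_iso (game_add (game_add X (game_conj Y)) (game_add Y Z))
  (game_add (game_add Y (game_conj Y)) (game_add X Z)).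
Proof.
apply: game_iso_trans (game_iso_add (game_add_isoC _ _) (game_iso_refl _)) _.
apply: game_iso_trans (game_add_isoACA _ _ _ _) _.
exact: game_iso_add (game_add_isoC _ _) (game_iso_refl _).
Qed.

(** * The syntactic order *)

Definition cge A C := nonneg_game (game_add A (game_conj C)).
Definition cgt A C := pos_game (game_add A (game_conj C)).

Lemma cgeE A C : cge A C = all (cgt^~ C) (rights A) && all (cgt A) (lefts C).
Proof. by rewrite /cge /nonneg_game rights_add rights_conj all_cat !all_map. Qed.

Lemma cgtE A C : cgt A C = cge A C && (has (cge^~ C) (lefts A) || has (cge A) (rights C)).
Proof. by rewrite /cgt pos_gameE -/(cge A C) lefts_add lefts_conj has_cat !has_map. Qed.

Lemma cgt_cge A C : cgt A C -> cge A C.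
Proof. by rewrite cgtE => /andP[]. Qed.

Lemma nonpos_neg_subE A C :
  nonpos_game (game_add A (game_conj C)) = cge C A /\
  neg_game (game_add A (game_conj C)) = cgt C A.
Proof.
move: A C; apply: game_size2_ind => A C IH.
have nonposE : nonpos_game (game_add A (game_conj C)) = cge C A.
  rewrite /nonpos_game lefts_add lefts_conj all_cat !all_map cgeE andbC.
  congr (_ && _); apply: eq_all_In => x x_in /=.
    by rewrite (proj2 (@IH A x _)) //; game_size_lia.
  by rewrite (proj2 (@IH x C _)) //; game_size_lia.
split=> //; rewrite neg_gameE nonposE cgtE rights_add rights_conj has_cat !has_map orbC.
congr (_ && (_ || _)); apply: eq_has_In => x x_in /=.
  by rewrite (proj1 (@IH A x _)) //; game_size_lia.
by rewrite (proj1 (@IH x C _)) //; game_size_lia.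
Qed.

Definition cmp_trans A B C := [/\ cge A B -> cge B C -> cge A C,
  cgt A B -> cge B C -> cgt A C & cge A B -> cgt B C -> cgt A C].

Section CmpTransStep.
Variables A B C : game.
Hypothesis IH : forall A' B' C', game_size A' + game_size B' + game_size C' <
  game_size A + game_size B + game_size C -> cmp_trans A' B' C'.

Lemma cge_trans_step : cge A B -> cge B C -> cge A C.
Proof.
move=> AB BC; move: (AB) (BC); rewrite !cgeE => /andP[/allInP AB_r _] /andP[_ /allInP BC_l].
apply/andP; split; apply/allInP => x x_in.
  by have [_ trans _] := @IH x B C ltac:(game_size_lia); apply: trans BC; apply: AB_r.
by have [_ _ trans] := @IH A B x ltac:(game_size_lia); apply: trans AB _; apply: BC_l.
Qed.

Lemma cgt_cge_trans_step : cgt A B -> cge B C -> cgt A C.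
Proof.
move=> AB BC; rewrite cgtE (cge_trans_step (cgt_cge AB) BC) /=.
move: AB; rewrite cgtE => /andP[AB /orP[/hasInP[a a_in aB]|/hasInP[b b_in Ab]]].
  have [trans _ _] := @IH a B C ltac:(game_size_lia).
  by apply/orP; left; apply/hasInP; exists a => //; apply: trans.
move: BC; rewrite cgeE => /andP[/allInP /(_ b b_in) + _].
rewrite cgtE => /andP[_ /orP[/hasInP[b' b'_in b'C]|/hasInP[c c_in bc]]].
  have [_ trans _] := @IH A b' C ltac:(game_size_lia).
  have Ab' : cgt A b' by move: Ab; rewrite cgeE => /andP[_ /allInP]; apply.
  by have := trans Ab' b'C; rewrite cgtE => /andP[].
have [trans _ _] := @IH A b c ltac:(game_size_lia).
by apply/orP; right; apply/hasInP; exists c => //; apply: trans.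
Qed.

Lemma cge_cgt_trans_step : cge A B -> cgt B C -> cgt A C.
Proof.
move=> AB BC; rewrite cgtE (cge_trans_step AB (cgt_cge BC)) /=.
move: BC; rewrite cgtE => /andP[_ /orP[/hasInP[b b_in bC]|/hasInP[c c_in Bc]]].
  have [_ trans _] := @IH A b C ltac:(game_size_lia).
  have Ab : cgt A b by move: AB; rewrite cgeE => /andP[_ /allInP]; apply.
  by have := trans Ab bC; rewrite cgtE => /andP[].
have [trans _ _] := @IH A B c ltac:(game_size_lia).
by apply/orP; right; apply/hasInP; exists c => //; apply: trans.
Qed.

End CmpTransStep.

Lemma cmp_transP A B C : cmp_trans A B C.
Proof.
move: A B C; apply: game_size3_ind => A B C IH.
by split; [apply: cge_trans_step | apply: cgt_cge_trans_step | apply: cge_cgt_trans_step].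
Qed.

Lemma cge_trans A B C : cge A B -> cge B C -> cge A C.
Proof. by case: (cmp_transP A B C). Qed.

Lemma cgt_cge_trans A B C : cgt A B -> cge B C -> cgt A C.
Proof. by case: (cmp_transP A B C). Qed.

Lemma cge_cgt_trans A B C : cge A B -> cgt B C -> cgt A C.
Proof. by case: (cmp_transP A B C). Qed.

(** * Numbers *)

Fixpoint cnumber (g : game) : bool :=
  let: Game l r := g in
  [&& all cnumber l, all cnumber r, all (cgt (Game l r)) l & all (cgt^~ (Game l r)) r].

Lemma cnumberE g : cnumber g =
  [&& all cnumber (lefts g), all cnumber (rights g),
      all (cgt g) (lefts g) & all (cgt^~ g) (rights g)].
Proof. by case: g. Qed.

Lemma cge_refl A : cnumber A -> cge A A.
Proof. by rewrite cnumberE cgeE => /and4P[_ _ -> ->]. Qed.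

Lemma cge_or_cgt A B : cnumber A -> cnumber B -> cge A B || cgt B A.
Proof.
move: A B; apply: game_size2_ind => A B IH A_num B_num.
have [//|] := boolP (cge A B); rewrite cgeE negb_and -!has_predC.
move: (A_num) (B_num); rewrite !cnumberE => /and4P[_ /allInP Ar_num _ /allInP Ar_gt].
move=> /and4P[/allInP Bl_num _ /allInP Bl_lt _].
case/orP=> /hasInP[x x_in /negbTE nx] /=.
  have /orP[Bx|] := IH B x ltac:(game_size_lia) B_num (Ar_num x x_in); last by rewrite nx.
  exact: cge_cgt_trans Bx (Ar_gt x x_in).
have /orP[xA|] := IH x A ltac:(game_size_lia) (Bl_num x x_in) A_num; last by rewrite nx.
exact: cgt_cge_trans (Bl_lt x x_in) xA.
Qed.

Lemma game_ge_trans TB A B C : game_ge TB A B -> game_ge TB B C -> game_ge TB A C.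
Proof. by move=> AB BC X p m p_le /BC /AB; apply. Qed.

Lemma cge_game_ge TB X Y : cge X Y -> cge Y Y -> game_ge TB X Y.
Proof.
(* Add X - Y to Y + Z, regroup, and remove the nonpositive Y - Y. *)
move=> XY YY Z p m p_le /(outcome_add_nonneg XY p_le).
rewrite (outcome_iso _ _ _ (game_add_sub_iso X Y Z)).
apply: contraTT => XZ_loss; apply: outcome_add_nonpos XZ_loss => //.
by rewrite (nonpos_neg_subE Y Y).1.
Qed.

Section NumberOptions.
Variables (TB : nat) (l r : seq game).
Let G := Game l r.
Hypothesis l_num : forall x, List.In x l -> cnumber x.
Hypothesis r_num : forall y, List.In y r -> cnumber y.
Hypothesis lt_l : forall x, List.In x l -> game_gt TB G x.
Hypothesis gt_r : forall y, List.In y r -> game_gt TB y G.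

(* Otherwise G >= x >= y > G semantically. *)
Lemma left_not_cge_right x y : List.In x l -> List.In y r -> ~~ cge x y.
Proof.
move=> x_in y_in; apply/negP => xy; apply: (gt_r y_in).2.
exact: game_ge_trans (lt_l x_in).1 (cge_game_ge xy (cge_refl (r_num y_in))).
Qed.

Lemma cgt_of_cge_right H : cnumber H -> (exists2 y, List.In y r & cge H y) -> cgt H G.
Proof.
elim/game_option_ind: H => H _ IHr H_num [y y_in Hy].
rewrite cgtE; apply/andP; split; last by apply/orP; right; apply/hasInP; exists y.
move: (H_num); rewrite cnumberE cgeE => /and4P[_ /allInP Hr_num _ /allInP Hr_gt].
apply/andP; split; apply/allInP => x x_in.
  apply: IHr => //; first exact: Hr_num.
  by exists y => //; apply/cgt_cge/(cgt_cge_trans (Hr_gt x x_in)).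
have /orP[xH|//] := cge_or_cgt (l_num x_in) H_num.
by have := left_not_cge_right x_in y_in; rewrite (cge_trans xH Hy).
Qed.

Lemma cgt_of_cge_left H : cnumber H -> (exists2 x, List.In x l & cge x H) -> cgt G H.
Proof.
elim/game_option_ind: H => H IHl _ H_num [x x_in xH].
rewrite cgtE; apply/andP; split; last by apply/orP; left; apply/hasInP; exists x.
move: (H_num); rewrite cnumberE cgeE => /and4P[/allInP Hl_num _ /allInP Hl_lt _].
apply/andP; split; apply/allInP => y y_in.
  have /orP[Hy|//] := cge_or_cgt H_num (r_num y_in).
  by have := left_not_cge_right x_in y_in; rewrite (cge_trans xH Hy).
apply: IHl => //; first exact: Hl_num.
by exists x => //; apply/cgt_cge/(cge_cgt_trans xH (Hl_lt y y_in)).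
Qed.

End NumberOptions.

Lemma is_number_cnumber TB G : is_number TB G -> cnumber G.
Proof.
elim=> l r _ l_num _ r_num lt_l gt_r /=; apply/and4P; split; apply/allInP => x x_in.
- exact: l_num.
- exact: r_num.
- apply: (@cgt_of_cge_left TB) => //; first exact: l_num.
  by exists x => //; apply/cge_refl/l_num.
- apply: (@cgt_of_cge_right TB) => //; first exact: r_num.
  by exists x => //; apply/cge_refl/r_num.
Qed.


Theorem mainTheorem7 (TB : nat) (G : game) :
  is_number TB G -> game_eq TB (game_add G (game_conj G)) zero.
Proof.
move=> /is_number_cnumber/cge_refl G_ge_G.
split=> Z p m p_le; rewrite (outcome_iso _ _ _ (game_add0_iso Z)).
  exact: outcome_add_nonneg.
apply: contraTT => /(outcome_add_nonpos _ p_le); apply.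
by rewrite (nonpos_neg_subE G G).1.
Qed.
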